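(* Let $R$ be a semi-local ring with maximal ideals $M_1,\dots,M_t$, and $n$ a positive integer. If for all nonnegative integers $\alpha_1,\dots,\alpha_t$ with $\alpha_1+\cdots+\alpha_t=n+1$ we have $M_1^{\alpha_1}\cdots M_t^{\alpha_t}=\{0\}$, then every proper ideal of $R$ is weakly $n$-absorbing.
   Context: All rings are commutative with $1\neq0$; a semi-local ring has finitely many maximal ideals. A proper ideal $I$ of $R$ is weakly $n$-absorbing if whenever $0\neq a_1\cdots a_{n+1}\in I$ with $a_1,\dots,a_{n+1}\in R$, there are $n$ of the $a_i$'s whose product is in $I$. *)

From mathcomp Require Import all_boot all_algebra.
Set Implicit Arguments. Unset Strict Implicit. Unset Printing Implicit Defensive.
Import GRing.Theory.
Local Open Scope ring_scope.

Section IdealDefs.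
Variable R : comNzRingType.

Definition is_idl (I : R -> Prop) : Prop :=
  [/\ I 0,
      (forall x y, I x -> I y -> I (x + y)),
      (forall x, I x -> I (- x)) &
      (forall r x, I x -> I (r * x))].

Definition proper_idl (I : R -> Prop) : Prop := is_idl I /\ ~ I 1.

Definition maximal_idl (M : R -> Prop) : Prop :=
  proper_idl M /\
  forall J : R -> Prop, is_idl J -> (forall x, M x -> J x) ->
    (forall x, J x <-> M x) \/ (forall x, J x).

Definition ideal_mul (I J : R -> Prop) : R -> Prop :=
  fun x => exists s : seq (R * R),
    (forall p, p \in s -> I p.1 /\ J p.2) /\
    x = \sum_(p <- s) p.1 * p.2.

Definition ideal_unit : R -> Prop := fun _ => True.

Fixpoint ideal_pow (I : R -> Prop) (k : nat) : R -> Prop :=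
  match k with
  | O => ideal_unit
  | S k' => ideal_mul I (ideal_pow I k')
  end.

Definition ideal_prod_pow (t : nat) (M : 'I_t -> R -> Prop) (a : 'I_t -> nat)
  : R -> Prop :=
  foldr ideal_mul ideal_unit [seq ideal_pow (M i) (a i) | i <- enum 'I_t].

Definition weakly_n_absorbing (n : nat) (I : R -> Prop) : Prop :=
  proper_idl I /\
  forall a : 'I_n.+1 -> R,
    \prod_(i < n.+1) a i != 0 -> I (\prod_(i < n.+1) a i) ->
    exists j : 'I_n.+1, I (\prod_(i < n.+1 | i != j) a i).

End IdealDefs.

(* If some factor a_j is a unit u^-1, the product of the other factors is
   u * (a_1 ... a_{n+1}), which lies in I.  Otherwise every a_i is a nonunit,
   so (Krull) it lies in a maximal ideal M_{f i}.  Grouping the factors along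
   f exhibits a_1 ... a_{n+1} as an element of M_1^{alpha_1} ... M_t^{alpha_t}
   with alpha_k = #{i | f i = k}, and sum alpha_k = n + 1, so the product is
   0: the hypothesis "0 <> a_1 ... a_{n+1} in I" is never met. *)
From mathcomp Require Import all_boot all_algebra.
From mathcomp Require Import boolp classical_sets.
Set Implicit Arguments. Unset Strict Implicit. Unset Printing Implicit Defensive.
Import GRing.Theory.
Local Open Scope classical_set_scope.
Local Open Scope ring_scope.

Section IdealProducts.
Variable R : comNzRingType.

Lemma ideal_mul_mul (K L : R -> Prop) x y :
  K x -> L y -> ideal_mul K L (x * y).
Proof.
move=> Kx Ly; exists [:: (x, y)]; split.
  by move=> p; rewrite inE => /eqP ->.
by rewrite big_cons big_nil addr0.
Qed.

Lemma prod_mem_foldr_ideal_mul (I : eqType) (K : I -> R -> Prop) (a : I -> R)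
    (s : seq I) :
  (forall i, i \in s -> K i (a i)) ->
  foldr (@ideal_mul R) (@ideal_unit R) [seq K i | i <- s] (\prod_(i <- s) a i).
Proof.
elim: s => [|j s IHs] Ka //=; rewrite big_cons.
apply: ideal_mul_mul; first by apply: Ka; rewrite mem_head.
by apply: IHs => i si; apply: Ka; rewrite inE si orbT.
Qed.

Lemma prod_mem_ideal_pow (I : eqType) (K : R -> Prop) (a : I -> R) (s : seq I) :
  (forall i, i \in s -> K (a i)) -> ideal_pow K (size s) (\prod_(i <- s) a i).
Proof.
elim: s => [|j s IHs] Ka //=; rewrite big_cons.
apply: ideal_mul_mul; first by apply: Ka; rewrite mem_head.
by apply: IHs => i si; apply: Ka; rewrite inE si orbT.
Qed.

Lemma prod_mem_ideal_prod_pow (t : nat) (M : 'I_t -> R -> Prop) (I : finType)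
    (a : I -> R) (f : I -> 'I_t) :
  (forall i, M (f i) (a i)) ->
  ideal_prod_pow M (fun k => #|[pred i | f i == k]|) (\prod_i a i).
Proof.
move=> Ma; rewrite (partition_big f predT) //= /ideal_prod_pow -big_enum.
apply: prod_mem_foldr_ideal_mul => k _.
rewrite cardE -big_enum; apply: prod_mem_ideal_pow => i.
by rewrite mem_enum inE => /eqP <-.
Qed.

Lemma sum_card_fibers (I : finType) (t : nat) (f : I -> 'I_t) :
  (\sum_(k < t) #|[pred i | f i == k]|)%N = #|I|.
Proof.
rewrite -sum1_card (partition_big f predT) //=.
by apply: eq_bigr => k _; rewrite sum1_card.
Qed.

End IdealProducts.

Section Krull.
Variable R : comNzRingType.

Lemma bigcup_chain_is_idl (F : set (set R)) (X0 : set R) :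
  F X0 -> X0 !=set0 -> (forall X, F X -> X !=set0 -> is_idl X) ->
  total_on F subset -> is_idl (\bigcup_(X in F) X).
Proof.
move=> FX0 nX0 Fidl tot.
have idlX X y : F X -> X y -> is_idl X.
  by move=> FX Xy; apply: Fidl => //; exists y.
split.
- by exists X0 => //; case: (Fidl _ FX0 nX0).
- move=> y z [X FX Xy] [Y FY Yz].
  have [XY|YX] := tot _ _ FX FY.
  + exists Y => //; case: (idlX _ _ FY Yz) => _ addY _ _.
    by apply: addY => //; apply: XY.
  + exists X => //; case: (idlX _ _ FX Xy) => _ addX _ _.
    by apply: addX => //; apply: YX.
- move=> y [X FX Xy]; exists X => //.
  by case: (idlX _ _ FX Xy) => _ _ oppX _; apply: oppX.
- move=> r y [X FX Xy]; exists X => //.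
  by case: (idlX _ _ FX Xy) => _ _ _ mulX; apply: mulX.
Qed.

Lemma maximal_proper_idl_maximal (A : set R) :
  proper_idl A ->
  (forall J : set R, proper_idl J -> A `<=` J -> J = A) -> maximal_idl A.
Proof.
move=> pA maxA; split => // J Jidl AJ.
have [J1|nJ1] := pselect (J 1).
  by right => r; case: Jidl => _ _ _ mulJ; rewrite -(mulr1 r); apply: mulJ.
by left => y; rewrite (maxA J).
Qed.

Lemma nonunit_mem_maximal_idl (x : R) : ~ (exists u, u * x = 1) ->
  exists N : R -> Prop, maximal_idl N /\ N x.
Proof.
move=> xNunit.
(* set0 is admitted so that the empty chain has an upper bound. *)
pose P (X : set R) := X = set0 \/ (proper_idl X /\ X x).
have Rx : P (fun y => exists r, y = r * x).
  right; split; last by exists 1; rewrite mul1r.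
  split; last by move=> [r r1]; apply: xNunit; exists r.
  split; first by exists 0; rewrite mul0r.
  - by move=> y z [r ->] [s ->]; exists (r + s); rewrite mulrDl.
  - by move=> y [r ->]; exists (- r); rewrite mulNr.
  - by move=> r y [s ->]; exists (r * s); rewrite mulrA.
have chainP F : F `<=` P -> total_on F subset -> P (\bigcup_(X in F) X).
  move=> FP tot.
  have [[X0 [FX0 nX0]]|] := pselect (exists X0, F X0 /\ X0 !=set0); last first.
    move=> /forallNP Fempty; left; apply/seteqP; split => // y [X FX Xy].
    by case: (Fempty X); split => //; exists y.
  have Fproper X : F X -> X !=set0 -> proper_idl X /\ X x.
    by move=> FX [y Xy]; case: (FP _ FX) => // X_0; rewrite X_0 in Xy.
  right; split; first split.
  - apply: bigcup_chain_is_idl FX0 nX0 _ tot => X FX nX.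
    by case: (Fproper _ FX nX) => -[].
  - by move=> [X FX X1]; case: (Fproper X FX) => //; [exists 1 | case].
  - by exists X0 => //; case: (Fproper _ FX0 nX0).
have [A [PA maxA]] := Zorn_bigcup chainP.
have [A0|[pA Ax]] := PA.
  exfalso; apply: (maxA _ _ Rx); rewrite A0; split => // sub0.
  by case: (sub0 0); exists 0; rewrite mul0r.
exists A; split => //; apply: maximal_proper_idl_maximal => // J pJ AJ.
apply/seteqP; split => //; apply: contrapT => JnA.
by apply: (maxA J); [split|right; split => //; apply: AJ].
Qed.

End Krull.

Theorem mainTheorem19 (R : comNzRingType) (t : nat) (M : 'I_t -> R -> Prop)
  (n : nat) :
  (* M_1, ..., M_t are exactly the (distinct) maximal ideals of R *)
  (forall i, maximal_idl (M i)) ->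
  (forall i j, (forall x, M i x <-> M j x) -> i = j) ->
  (forall N : R -> Prop, maximal_idl N ->
     exists i, forall x, N x <-> M i x) ->
  (0 < n)%N ->
  (forall a : 'I_t -> nat, (\sum_(i < t) a i)%N = n.+1 ->
     forall x, ideal_prod_pow M a x -> x = 0) ->
  forall I : R -> Prop, proper_idl I -> weakly_n_absorbing n I.
Proof.
move=> _ _ Mall _ Mprod0 I pI; split => // a a0 Ia.
have [[j [u ua1]]|allNunit] := pselect (exists j, exists u, u * a j = 1).
  exists j; rewrite (_ : \prod_(i < n.+1 | i != j) a i = u * \prod_i a i).
    by case: pI => -[_ _ _ mulI] _; apply: mulI.
  by rewrite [in RHS](bigD1 j) //= mulrA ua1 mul1r.
have Ma i : exists k, M k (a i).
  have [N [maxN Na]] :=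
    nonunit_mem_maximal_idl (fun u => allNunit (ex_intro _ i u)).
  by have [k Nk] := Mall N maxN; exists k; apply/Nk.
have [f Mfa] := choice Ma.
have fibers : (\sum_k #|[pred i | f i == k]|)%N = n.+1.
  by rewrite sum_card_fibers card_ord.
by case/eqP: a0; apply: Mprod0 fibers _ (prod_mem_ideal_prod_pow Mfa).
Qed.
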